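(* Let $G=(V,E)$ be a finite simple graph, let $A$ be a nonzero commutative ring with unity, and let $R=A[V]$ be the polynomial ring over $A$ whose variables are the vertices of $G$. Then the open neighborhood ideal $\mathcal{N}(G)=(X_{N(v)} \mid v\in V)R$ satisfies $$\mathcal{N}(G)=\bigcap_{D}(D)R=\bigcap_{D\ \mathrm{minimal}}(D)R,$$ where the first intersection runs over all total dominating sets $D$ of $G$, and the second over all minimal total dominating sets of $G$. Moreover, the second decomposition is irredundant.
   Context: For $v\in V$, $N(v)=\{u\in V: uv\in E\}$ is the open neighborhood of $v$, and for $S\subseteq V$, $N(S)=\bigcup_{v\in S}N(v)$. For $U\subseteq V$, $X_U=\prod_{v\in U}v\in A[V]$. For $D\subseteq V$, $(D)R$ denotes the ideal generated by the variables in $D$. A set $D\subseteq V$ is a total dominating set (TD-set) of $G$ if $N(D)=V$; it is a minimal TD-set if no proper subset of $D$ is a TD-set. *)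

From mathcomp Require Import all_boot all_order all_algebra.
From mathcomp Require Import multinomials.mpoly.
Set Implicit Arguments. Unset Strict Implicit. Unset Printing Implicit Defensive.
Import GRing.Theory.
Local Open Scope ring_scope.

(* A finite simple graph on vertex set 'I_n is given by an adjacency
   relation e : rel 'I_n, assumed symmetric and irreflexive. *)

Definition nbhd (n : nat) (e : rel 'I_n) (v : 'I_n) : {set 'I_n} :=
  [set u | e u v].

Definition nbhdS (n : nat) (e : rel 'I_n) (S : {set 'I_n}) : {set 'I_n} :=
  \bigcup_(v in S) nbhd e v.

Definition is_TD (n : nat) (e : rel 'I_n) (D : {set 'I_n}) : bool :=
  nbhdS e D == [set: 'I_n].

Definition is_minTD (n : nat) (e : rel 'I_n) (D : {set 'I_n}) : bool :=
  minset (fun B : {set 'I_n} => is_TD e B) D.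

Definition XU (A : comNzRingType) (n : nat) (U : {set 'I_n}) : {mpoly A[n]} :=
  \prod_(v in U) 'X_v.

Definition in_ideal (A : comNzRingType) (n : nat) (s : seq {mpoly A[n]})
    (p : {mpoly A[n]}) : Prop :=
  exists c : nat -> {mpoly A[n]}, p = \sum_(i < size s) c i * s`_i.

Definition var_ideal (A : comNzRingType) (n : nat) (D : {set 'I_n})
    (p : {mpoly A[n]}) : Prop :=
  in_ideal [seq ('X_v : {mpoly A[n]}) | v <- enum D] p.

Definition nbhd_ideal (A : comNzRingType) (n : nat) (e : rel 'I_n)
    (p : {mpoly A[n]}) : Prop :=
  in_ideal [seq XU A (nbhd e v) | v <- enum 'I_n] p.

From mathcomp Require Import all_boot all_order all_algebra.
From mathcomp Require Import multinomials.mpoly.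
Set Implicit Arguments. Unset Strict Implicit. Unset Printing Implicit Defensive.
Import GRing.Theory.
Local Open Scope ring_scope.

(* All ideals involved are monomial ideals, so everything is decided monomial
   by monomial.  A monomial X^m lies in (D)R iff D meets supp m, and it lies
   in N(G) iff supp m contains some N(v).  If supp m contains no N(v), then
   every N(v) meets the complement of supp m, i.e. that complement is a
   TD-set; it contains a minimal TD-set D, and a polynomial of (D)R has no
   monomial avoiding D.  Irredundancy: for a minimal TD-set D0, the monomial
   X_{V \ D0} lies in (D)R for every other minimal TD-set D, because D is
   not contained in D0, but not in (D0)R since its coefficient is 1 != 0. *)

Section IdealMembership.
Variables (A : comNzRingType) (n : nat).
Implicit Types (s t : seq {mpoly A[n]}) (p q r x : {mpoly A[n]}).

Lemma in_ideal0 s : in_ideal s 0.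
Proof. by exists (fun=> 0); rewrite big1 // => i _; rewrite mul0r. Qed.

Lemma in_idealD s p q : in_ideal s p -> in_ideal s q -> in_ideal s (p + q).
Proof.
case=> c ->; case=> d ->; exists (fun i => c i + d i).
by rewrite -big_split /=; apply: eq_bigr => i _; rewrite mulrDl.
Qed.

Lemma in_idealMl s r p : in_ideal s p -> in_ideal s (r * p).
Proof.
case=> c ->; exists (fun i => r * c i).
by rewrite mulr_sumr; apply: eq_bigr => i _; rewrite mulrA.
Qed.

Lemma in_ideal_gen s x : x \in s -> in_ideal s x.
Proof.
move=> xs; have ltxs : (index x s < size s)%N by rewrite index_mem.
exists (fun i => (i == index x s)%:R).
rewrite (bigD1 (Ordinal ltxs)) //= eqxx mul1r nth_index // big1 ?addr0 //.
by move=> i /negbTE; rewrite -val_eqE /= => ->; rewrite mul0r.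
Qed.

Lemma in_ideal_trans s t p :
  (forall x, x \in t -> in_ideal s x) -> in_ideal t p -> in_ideal s p.
Proof.
move=> gen_t [c ->]; apply: big_ind; [exact: in_ideal0 | exact: in_idealD |].
by move=> i _; apply/in_idealMl/gen_t/mem_nth.
Qed.

Lemma in_ideal_mpolyX s u m :
  'X_[u] \in s -> (u <= m)%MM -> in_ideal s 'X_[m].
Proof.
move=> us le_um; rewrite -(submK le_um) mpolyXD.
exact/in_idealMl/in_ideal_gen.
Qed.

End IdealMembership.

Section MonomialIdeals.
Variables (A : comNzRingType) (n : nat).
Implicit Types (D U : {set 'I_n}) (p c : {mpoly A[n]}) (m u : 'X_{1..n}).

Lemma XU_mesym1 U : XU A U = 'X_[mesym1 U].
Proof.
rewrite /XU mprodXE; congr 'X_[_]; apply/mnmP => i.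
rewrite mnm_sumE mnmE big_mkcond (bigD1 i) //= mnm1E eqxx big1 ?addn0 //.
by move=> j neq_ji; case: (j \in U); rewrite // mnm1E (negbTE neq_ji).
Qed.

Lemma mesym1_le U m : U \subset [set i | m i != 0%N] -> (mesym1 U <= m)%MM.
Proof.
move=> /subsetP suppU; apply/mnm_lepP => i; rewrite mnmE.
by case: (boolP (i \in U)) => // /suppU; rewrite inE lt0n.
Qed.

Lemma mcoeff_mulX_eq0 c u m : ~~ (u <= m)%MM -> (c * 'X_[u])@_m = 0.
Proof.
move=> not_le_um; rewrite (mpolyE c) mulr_suml raddf_sum /=; apply: big1 => k _.
rewrite -scalerAl -mpolyXD mcoeffZ mcoeffX.
case: eqP => [eq_km | _]; last by rewrite mulr0.
by rewrite -eq_km lem_addl in not_le_um.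
Qed.

Lemma var_ideal_mcoeff_eq0 D p m :
  var_ideal D p -> (forall i, i \in D -> m i = 0%N) -> p@_m = 0.
Proof.
move=> [c ->] m_offD; rewrite raddf_sum /=; apply: big1 => j _.
have /mapP [d dD ->] := mem_nth 0 (ltn_ord j).
by apply: mcoeff_mulX_eq0; rewrite lep1mP negbK m_offD // -mem_enum.
Qed.

Lemma var_ideal_mpolyX D d m :
  d \in D -> m d != 0%N -> var_ideal D ('X_[m] : {mpoly A[n]}).
Proof.
move=> dD md; apply: (@in_ideal_mpolyX _ _ _ U_(d)); last by rewrite lep1mP.
by apply/mapP; exists d; rewrite ?mem_enum.
Qed.

Lemma var_ideal_mpolyX_compl D D0 :
  ~~ (D \subset D0) -> var_ideal D ('X_[mesym1 (~: D0)] : {mpoly A[n]}).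
Proof.
case/subsetPn => d dD dD0.
by apply: (@var_ideal_mpolyX D d (mesym1 (~: D0)) dD); rewrite mnmE inE dD0.
Qed.

Lemma not_var_ideal_mpolyX_compl D0 :
  ~ var_ideal D0 ('X_[mesym1 (~: D0)] : {mpoly A[n]}).
Proof.
move=> /var_ideal_mcoeff_eq0 coef_eq0; have /eqP := oner_neq0 A; apply.
rewrite -(coef_eq0 (mesym1 (~: D0))) ?mcoeffX ?eqxx // => i iD0.
by rewrite mnmE inE iD0.
Qed.

End MonomialIdeals.

Section NeighbourhoodIdeal.
Variables (A : comNzRingType) (n : nat) (e : rel 'I_n).
Hypothesis e_sym : ssrbool.symmetric e.
Implicit Types (D : {set 'I_n}) (p : {mpoly A[n]}) (m : 'X_{1..n}).

Lemma is_TDP D :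
  reflect (forall v, exists2 d, d \in D & d \in nbhd e v) (is_TD e D).
Proof.
apply: (iffP eqP) => [TD v | meets].
  have : v \in nbhdS e D by rewrite TD inE.
  by case/bigcupP => d dD; rewrite inE => evd; exists d; rewrite // inE e_sym.
apply/setP => v; rewrite inE; apply/bigcupP.
by have [d dD] := meets v; rewrite inE => edv; exists d; rewrite // inE e_sym.
Qed.

Lemma nbhd_ideal_var_ideal p D :
  nbhd_ideal e p -> is_TD e D -> var_ideal D p.
Proof.
move=> p_nbhd /is_TDP TD; apply: in_ideal_trans p_nbhd => _ /mapP [v _ ->].
have [d dD dNv] := TD v; rewrite /XU (bigD1 d) //= mulrC.
by apply/in_idealMl/in_ideal_gen/mapP; exists d; rewrite ?mem_enum.
Qed.

Lemma is_TD_setC S : is_TD e (~: S) = [forall v, ~~ (nbhd e v \subset S)].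
Proof.
apply/idP/forallP => [/is_TDP meets v | not_sub]; last apply/is_TDP => v.
  by have [d dS dNv] := meets v; apply/subsetPn; exists d; rewrite // -in_setC.
by have /subsetPn [d dNv dS] := not_sub v; exists d; rewrite // inE.
Qed.

Lemma nbhd_ideal_mpolyX v m :
  nbhd e v \subset [set i | m i != 0%N] -> nbhd_ideal e ('X_[m] : {mpoly A[n]}).
Proof.
move=> /mesym1_le le_Nv_m; apply: in_ideal_mpolyX le_Nv_m.
by apply/mapP; exists v; rewrite ?mem_enum ?XU_mesym1.
Qed.

Lemma minTD_var_ideal_nbhd_ideal p :
  (forall D, is_minTD e D -> var_ideal D p) -> nbhd_ideal e p.
Proof.
move=> in_minTD; rewrite (mpolyE p) big_seq; apply: big_ind.
- exact: in_ideal0.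
- exact: in_idealD.
move=> m; rewrite mcoeff_msupp -mul_mpolyC => pm_neq0; apply: in_idealMl.
set S := [set i | m i != 0%N].
have [/existsP [v NvS] | no_Nv] := boolP [exists v, nbhd e v \subset S].
  exact: nbhd_ideal_mpolyX NvS.
have /minset_exists [D minD sub_DSc] : is_TD e (~: S).
  by rewrite is_TD_setC -negb_exists.
case/eqP: pm_neq0; apply: (var_ideal_mcoeff_eq0 (in_minTD D minD)) => i iD.
by have := subsetP sub_DSc i iD; rewrite !inE negbK => /eqP.
Qed.

End NeighbourhoodIdeal.

Theorem theorem2p10 (A : comNzRingType) (n : nat) (e : rel 'I_n)
    (e_sym : ssrbool.symmetric e) (e_irr : irreflexive e) :
  (* N(G) = intersection of (D)R over all TD-sets D *)
  (forall p : {mpoly A[n]},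
     nbhd_ideal e p <-> (forall D : {set 'I_n}, is_TD e D -> var_ideal D p)) /\
  (* N(G) = intersection of (D)R over all minimal TD-sets D *)
  (forall p : {mpoly A[n]},
     nbhd_ideal e p <-> (forall D : {set 'I_n}, is_minTD e D -> var_ideal D p)) /\
  (* the decomposition over minimal TD-sets is irredundant *)
  (forall D0 : {set 'I_n}, is_minTD e D0 ->
     exists p : {mpoly A[n]},
       (forall D : {set 'I_n}, is_minTD e D -> D != D0 -> var_ideal D p) /\
       ~ var_ideal D0 p).
Proof.
have nbhd_TD := nbhd_ideal_var_ideal e_sym.
have minTD_nbhd := minTD_var_ideal_nbhd_ideal e_sym.
split; [|split] => [p | p | D0 minD0].
- split=> [p_nbhd D | in_TD]; first exact: nbhd_TD.
  by apply: minTD_nbhd => D /minsetp; apply: in_TD.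
- split=> [p_nbhd D /minsetp | ]; [exact: nbhd_TD | exact: minTD_nbhd].
exists 'X_[mesym1 (~: D0)]; split; last exact: not_var_ideal_mpolyX_compl.
move=> D minD neq_DD0; apply: var_ideal_mpolyX_compl; apply: contra neq_DD0.
by move=> sub_DD0; rewrite (minsetinf minD0 (minsetp minD) sub_DD0).
Qed.
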